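(* Let $\mathcal D$ be a finite nonempty set. Let $\Psi:\mathcal H^{\mathcal D}_{P,R}\to(\mathcal H^{\mathcal D}_{P,R})^{*g}$ be the unique Hopf algebra morphism such that $\Psi\circ B_d^+=\gamma_d^{*g}\circ\Psi$ for all $d\in\mathcal D$ (such a morphism exists and is unique). Then $\Psi$ is an isomorphism of graded Hopf algebras.
   Context: $\mathcal H^{\mathcal D}_{P,R}$ is the Hopf algebra of planar rooted trees decorated by $\mathcal D$: the free associative unital $\mathbb Q$-algebra on the set of planar rooted trees (finite trees with a root, embedded in the plane, edges oriented away from the root) whose vertices carry decorations in $\mathcal D$; the basis is the set of planar forests $t_1\cdots t_n$ ($1$ = empty forest). Coproduct: $\Delta(F)=\sum_cP^c(F)\otimes R^c(F)$ over all cuts $c$ of $F=t_1\cdots t_n$, where a cut is a tuple $(c_i)$, each $c_i$ being either the empty cut of $t_i$ ($P=1,R=t_i$), the total cut ($P=t_i,R=1$), or an admissible cut, i.e. a nonempty set of edges of $t_i$ such that every oriented path meets at most one of them, with $R^{c_i}(t_i)$ the component of the root and $P^{c_i}(t_i)$ the left-to-right planar forest of the other components; $P^c(F)=\prod_iP^{c_i}(t_i)$, $R^c(F)=\prod_iR^{c_i}(t_i)$. Counit: $\varepsilon(F)=0$ for $F\ne1$. It is graded by weight (number of vertices), with finite-dimensional components. $B_d^+$ grafts a forest $t_1\cdots t_n$ (in this order) on a new root decorated by $d$, and $\bullet_d=B_d^+(1)$. For a graded Hopf algebra $A=\bigoplus_nA_n$ with $A_0$ one-dimensional and finite-dimensional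 $A_n$, the graded dual $A^{*g}=\bigoplus_nA_n^*$ is the graded Hopf algebra with $(fg)(x)=(f\otimes g)(\Delta(x))$, unit $\varepsilon$, $\Delta(f)(x\otimes y)=f(xy)$, counit $f\mapsto f(1)$, antipode $f\mapsto f\circ S$, $(A^{*g})_n=A_n^*$. Define the linear map $\gamma_d:\mathcal H^{\mathcal D}_{P,R}\to\mathcal H^{\mathcal D}_{P,R}$ by $\gamma_d(1)=0$, $\gamma_d(t_1\cdots t_n)=t_1\cdots t_{n-1}$ if $t_n=\bullet_d$ and $0$ otherwise, and $\gamma_d^{*g}(f)=f\circ\gamma_d$ its transpose on the graded dual. *)

From HB Require Import structures.
From mathcomp Require Import all_boot all_order all_algebra.
From mathcomp Require Import finmap.
From mathcomp.multinomials Require Import monalg.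

Set Implicit Arguments.
Unset Strict Implicit.
Unset Printing Implicit Defensive.

Import GRing.Theory.
Local Open Scope ring_scope.

(* Planar rooted trees decorated by D: a root decorated by d, followed  *)
(* by the (left-to-right ordered) sequence of its subtrees.             *)
Inductive ptree (D : Type) : Type := PNode of D & seq (ptree D).
Arguments PNode {D} d ch.

Section PTreeCount.
Variable D : countType.

Fixpoint ptree_enc (t : ptree D) : GenTree.tree D :=
  let: PNode d ch := t in GenTree.Node 0 (GenTree.Leaf d :: map ptree_enc ch).

Fixpoint ptree_dec (g : GenTree.tree D) : option (ptree D) :=
  match g with
  | GenTree.Node 0 (GenTree.Leaf d :: ch) =>
      Some (PNode d (pmap ptree_dec ch))
  | _ => None
  end.

Lemma ptree_encK : pcancel ptree_enc ptree_dec.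
Proof.
rewrite /pcancel; fix IH 1 => -[d ch] /=; congr (Some (PNode d _)).
elim: ch => //= t ch IHch.
by rewrite IH /= IHch.
Qed.

HB.instance Definition _ := Countable.copy (ptree D) (pcan_type ptree_encK).
End PTreeCount.

Fixpoint tweight (D : Type) (t : ptree D) : nat :=
  let: PNode _ ch := t in (sumn (map (@tweight D) ch)).+1.

(* Planar forests t_1 ... t_n = words in trees (free monoid on trees);  *)
(* the empty forest is the unit 1.                                      *)
Definition forest (D : finType) := {fmonom ptree D}.

Definition fweight (D : finType) (F : forest D) : nat :=
  sumn (map (@tweight D) (fmonom_val F)).

(* The algebra H^D_{P,R}: free associative unital Q-algebra on trees,  *)
(* i.e. the monoid algebra of the free monoid of planar forests.        *)
Definition HPR (D : finType) := {malg rat[forest D]}.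

(* The graded dual (H^D_{P,R})^{*g}.  Since every homogeneous component *)
(* is finite dimensional with basis the forests of that weight, an      *)
(* element f of the graded dual is the same as a finitely supported     *)
(* function on forests (its values on the basis); we store it as such.  *)
Definition HPRgd (D : finType) := {malg rat[forest D]}.
Definition dval (D : finType) (f : HPRgd D) (F : forest D) : rat := f@_F.

Definition prodseq (A : Type) (ls : seq (seq A)) : seq (seq A) :=
  foldr (fun l acc => [seq x :: y | x <- l, y <- acc]) [:: [::]] ls.

(* [rootcuts t]: the cuts of t that are either the empty cut or an      *)
(* admissible cut, listed with multiplicity as pairs (P^c(t), R^c(t)).  *)
(* For t = B_d^+(t_1 ... t_k), such a cut is given by choosing, for     *)
(* every child t_i, either to cut the edge from the root to t_i (t_i    *)
(* then goes entirely to P and no edge below it may be cut) or to keep  *)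
(* it and choose recursively such a cut of t_i.  P is the left-to-right *)
(* concatenation of the cut-off pieces and R the component of the root. *)
Fixpoint rootcuts (D : Type) (t : ptree D) : seq (seq (ptree D) * ptree D) :=
  let: PNode d ch := t in
  [seq (flatten (map fst s), PNode d (pmap snd s))
  | s <- prodseq
           (map (fun c => ([:: c], None) ::
                          [seq (pr.1, Some pr.2) | pr <- rootcuts c]) ch)].

(* all cuts of a tree: total cut, then empty/admissible cuts *)
Definition tcuts (D : Type) (t : ptree D) : seq (seq (ptree D) * seq (ptree D)) :=
  ([:: t], [::]) :: [seq (pr.1, [:: pr.2]) | pr <- rootcuts t].

Definition cuts (D : finType) (F : forest D) : seq (forest D * forest D) :=
  [seq (FMonom (flatten (map fst s)), FMonom (flatten (map snd s)))
  | s <- prodseq (map (@tcuts D) (fmonom_val F))].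

(* algebra morphism: Psi(1) = counit of H (the unit of H^{*g}) and      *)
(* Psi(xy) = Psi(x) Psi(y), where (fg)(F) = (f (x) g)(Delta F).         *)
Definition is_alg_morph (D : finType) (Psi : HPR D -> HPRgd D) : Prop :=
  (forall F : forest D, dval (Psi 1) F = (F == (mone : forest D))%:R) /\
  (forall (x y : HPR D) (F : forest D),
      dval (Psi (x * y)) F =
      \sum_(c <- cuts F) dval (Psi x) c.1 * dval (Psi y) c.2).

(* coalgebra morphism: counit of H^{*g} (f |-> f(1)) composed with Psi  *)
(* is the counit of H, and Delta(Psi K) = (Psi (x) Psi)(Delta K), both  *)
(* sides evaluated on F (x) G, where Delta(f)(F (x) G) = f(FG).         *)
Definition is_coalg_morph (D : finType) (Psi : HPR D -> HPRgd D) : Prop :=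
  (forall x : HPR D, dval (Psi x) (mone : forest D) = x@_(mone : forest D)) /\
  (forall K F G : forest D,
      dval (Psi << K >>) (mmul F G) =
      \sum_(c <- cuts K) dval (Psi << c.1 >>) F * dval (Psi << c.2 >>) G).

(* A Hopf algebra morphism is a bialgebra morphism (compatibility with  *)
(* the antipodes is then automatic).                                   *)
Definition is_hopf_morph (D : finType) (Psi : {linear HPR D -> HPRgd D}) : Prop :=
  is_alg_morph Psi /\ is_coalg_morph Psi.

Definition Bplus (D : finType) (d : D) (x : HPR D) : HPR D :=
  \sum_(F <- msupp x) x@_F *: << (FMonom [:: PNode d (fmonom_val F)] : forest D) >>.

(* gamma_d on forests: t_1...t_{n-1} if t_n = bullet_d, else 0 (None) *)
Definition gamma (D : finType) (d : D) (F : forest D) : option (forest D) :=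
  match rev (fmonom_val F) with
  | t :: r => if t == PNode d [::] then Some (FMonom (rev r)) else None
  | [::] => None
  end.

Definition gamma_gd (D : finType) (d : D) (f : HPRgd D) (F : forest D) : rat :=
  if gamma d F is Some F' then dval f F' else 0.

Definition Bplus_compat (D : finType) (Psi : {linear HPR D -> HPRgd D}) : Prop :=
  forall (d : D) (x : HPR D) (F : forest D),
    dval (Psi (Bplus d x)) F = gamma_gd d (Psi x) F.

Definition is_graded (D : finType) (Psi : {linear HPR D -> HPRgd D}) : Prop :=
  forall F G : forest D, dval (Psi << F >>) G != 0 -> fweight G = fweight F.

(* Writing <F, G> for Psi(F)(G), multiplicativity and compatibility with
   B_d^+ determine <F, G> by induction on F (see [pairing]); conversely the
   pairing defined by that recursion is multiplicative in F because cutting is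
   coassociative, satisfies <F, G G'> = sum_c <P^c(F), G> <R^c(F), G'> by
   induction on F, and vanishes unless F and G have the same weight.
   Psi hits every G^* = << G >>, by induction on the weight of G and then on
   the weight of its last tree. If G = G' bullet_d, then G^* = Psi(B_d^+(x)) for
   Psi(x) = G'^*. If G = G' B_d^+(H) with H <> 1, take Psi(x) = H^* and
   Psi(y) = (G' bullet_d)^*: the value of Psi(x y) at F counts the cuts of F
   with P^c(F) = H and R^c(F) = G' bullet_d, so it is nonzero at G, and every
   other forest where it is nonzero has the weight of G and a lighter last tree.
   Finally Psi preserves the weight and the homogeneous components are finite
   dimensional, so on each of them the matrix of Psi is invertible. *)

From HB Require Import structures.
From mathcomp Require Import all_boot all_order all_algebra.
From mathcomp Require Import finmap.
From mathcomp.multinomials Require Import monalg.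
From mathcomp Require Import zify.

Set Implicit Arguments.
Unset Strict Implicit.
Unset Printing Implicit Defensive.

Import GRing.Theory Num.Theory.
Local Open Scope ring_scope.

Lemma prodseq_cat (A : Type) (l1 l2 : seq (seq A)) :
  prodseq (l1 ++ l2) = [seq x ++ y | x <- prodseq l1, y <- prodseq l2].
Proof.
elim: l1 => [|l l1 IH] /=; first by rewrite cats0 map_id.
rewrite IH; elim: l => [|x l IHl] //=.
by rewrite allpairs_cat IHl map_allpairs allpairs_mapl.
Qed.

Lemma prodseq_map (A B : Type) (f : A -> B) (L : seq (seq A)) :
  prodseq (map (map f) L) = map (map f) (prodseq L).
Proof.
by elim: L => [|l L IH] //=; rewrite IH allpairs_mapl allpairs_mapr map_allpairs.
Qed.

Lemma big_mul_exchange (R : comPzSemiRingType) (I J K L : Type)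
    (rI : seq I) (rJ : seq J) (rK : seq K) (rL : seq L)
    (f : I -> K -> R) (g : J -> K -> R) (h : I -> L -> R) (k : J -> L -> R) :
  \sum_(i <- rI) \sum_(j <- rJ)
     (\sum_(x <- rK) f i x * g j x) * (\sum_(y <- rL) h i y * k j y) =
  \sum_(x <- rK) \sum_(y <- rL)
     (\sum_(i <- rI) f i x * h i y) * (\sum_(j <- rJ) g j x * k j y).
Proof.
transitivity (\sum_(i <- rI) \sum_(j <- rJ) \sum_(x <- rK) \sum_(y <- rL)
                (f i x * h i y) * (g j x * k j y)).
  apply: eq_bigr => i _; apply: eq_bigr => j _; rewrite big_distrlr.
  by apply: eq_bigr => x _; apply: eq_bigr => y _; rewrite mulrACA.
symmetry; under eq_bigr => x _ do under eq_bigr => y _ do rewrite big_distrlr /=.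
under eq_bigr do rewrite exchange_big.
rewrite exchange_big; apply: eq_bigr => x _.
under eq_bigr do rewrite exchange_big.
by rewrite exchange_big.
Qed.

Lemma malgZU (K : choiceType) (R : ringType) (c : R) (k : K) :
  << c *g k >> = c *: << k >> :> {malg R[K]}.
Proof. by apply/malgP => k'; rewrite mcoeffZ !mcoeffU mulr_natr. Qed.

Section LinearImage.
Variables (K : choiceType) (R : fieldType) (U : lmodType R).
Variable Phi : {linear U -> {malg R[K]}}.

Definition in_image (f : {malg R[K]}) := exists u, Phi u = f.

Lemma in_image_sum (I : eqType) (r : seq I) (P : pred I) (F : I -> {malg R[K]}) :
  (forall i, i \in r -> P i -> in_image (F i)) -> in_image (\sum_(i <- r | P i) F i).
Proof.
move=> imF; rewrite big_seq_cond; apply: big_ind => [||i /andP[/imF]//].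
  by exists 0; rewrite linear0.
by move=> f g [u <-] [v <-]; exists (u + v); rewrite linearD.
Qed.

Lemma in_image_sub f g : in_image f -> in_image g -> in_image (f - g).
Proof. by move=> [u <-] [v <-]; exists (u - v); rewrite linearB. Qed.

Lemma in_imageZ a f : in_image f -> in_image (a *: f).
Proof. by move=> [u <-]; exists (a *: u); rewrite linearZ. Qed.

Lemma in_image_malgU (f : {malg R[K]}) k :
  in_image f -> f@_k != 0 ->
  (forall k', k' \in msupp f -> k' != k -> in_image << k' >>) ->
  in_image << k >>.
Proof.
move=> [u Pu] fk0 imf.
have -> : << k >> = (f@_k)^-1 *: (f - \sum_(k' <- msupp f | k' != k) f@_k' *: << k' >>).
  rewrite [in X in X - _](monalgE f) (bigD1_seq k) ?fset_uniq -?mcoeff_neq0 //=.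
  under eq_bigr do rewrite malgZU.
  by rewrite (malgZU (f@_k)) addrK scalerA mulVf // scale1r.
apply/in_imageZ/in_image_sub; first by exists u.
by apply: in_image_sum => k' k'f nk'; apply/in_imageZ/imf.
Qed.
End LinearImage.

(** * Cuts of planar forests *)

Section Cuts.
Variable D : countType.
Local Notation tree := (ptree D).
Implicit Types (s : seq tree) (c : seq tree * seq tree).

Definition sweight s : nat := sumn (map (@tweight D) s).

Lemma sweight_cat s1 s2 : sweight (s1 ++ s2) = (sweight s1 + sweight s2)%N.
Proof. by rewrite /sweight map_cat sumn_cat. Qed.

Lemma sweight_nil : sweight [::] = 0%N.
Proof. by []. Qed.

Lemma sweight_cons t s : sweight (t :: s) = (tweight t + sweight s)%N.
Proof. by []. Qed.

Lemma sweight_rcons s t : sweight (rcons s t) = (sweight s + tweight t)%N.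
Proof. by rewrite -cats1 sweight_cat sweight_cons addn0. Qed.

Lemma tweightE d ch : tweight (PNode d ch) = (sweight ch).+1.
Proof. by []. Qed.

Lemma sweight_gt0 s : (0 < sweight s)%N = (s != [::]).
Proof. by case: s => // -[d ch] s. Qed.

Lemma ptrees_ind (P : seq tree -> Prop) :
  P [::] -> (forall d ch s, P ch -> P s -> P (PNode d ch :: s)) ->
  forall s, P s.
Proof.
move=> P0 PS s; have [n] := ubnP (sweight s); elim: n s => // n IH [|[d ch] s] //.
by rewrite ltnS sweight_cons tweightE => lt_s; apply: PS; apply: IH; lia.
Qed.

Definition scuts s : seq (seq tree * seq tree) :=
  [seq (flatten (map fst x), flatten (map snd x)) | x <- prodseq (map (@tcuts D) s)].

Lemma scuts_nil : scuts [::] = [:: ([::], [::])].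
Proof. by []. Qed.

Lemma scuts_cat s1 s2 :
  scuts (s1 ++ s2) = [seq (a.1 ++ b.1, a.2 ++ b.2) | a <- scuts s1, b <- scuts s2].
Proof.
rewrite /scuts map_cat prodseq_cat map_allpairs allpairs_mapl allpairs_mapr.
by apply: eq_allpairs => x y; rewrite !map_cat !flatten_cat.
Qed.

Lemma scuts_tree d ch :
  scuts [:: PNode d ch] =
  ([:: PNode d ch], [::]) :: [seq (c.1, [:: PNode d c.2]) | c <- scuts ch].
Proof.
rewrite /scuts /= allpairs1r /=; congr (_ :: _); rewrite -!map_comp.
pose lift (p : seq tree * option tree) := (p.1, if p.2 is Some t then [:: t] else [::]).
pose choices (t : tree) := ([:: t], None) :: [seq (pr.1, Some pr.2) | pr <- rootcuts t].
have -> : map (@tcuts D) ch = map (map lift) (map choices ch).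
  rewrite -map_comp; apply: eq_map => t /=; rewrite /tcuts /choices /= -map_comp.
  by congr (_ :: _); apply: eq_map => -[].
rewrite prodseq_map -map_comp; apply: eq_map => x /=.
rewrite !cats0 -map_comp; congr (_, [:: PNode d _]).
by elim: x => // -[a [t|]] x /= ->.
Qed.

Lemma scuts_weight s c : c \in scuts s -> (sweight c.1 + sweight c.2)%N = sweight s.
Proof.
elim/ptrees_ind: s c => [|d ch s IHch IHs] c; first by rewrite inE => /eqP ->.
rewrite -cat1s scuts_cat => /allpairsP [[a b] [/= + /IHs + ->]] /=.
rewrite scuts_tree inE => /predU1P [-> /=|/mapP [x /IHch + ->]] /=;
  rewrite ?sweight_cat !sweight_cons !tweightE; lia.
Qed.

Lemma mem_scuts_empty s : ([::], s) \in scuts s.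
Proof.
elim/ptrees_ind: s => [|d ch s IHch IHs]; first by rewrite mem_seq1.
rewrite -cat1s scuts_cat; apply/allpairsP; exists (([::], [:: PNode d ch]), ([::], s)).
by rewrite scuts_tree inE; split=> //; apply/orP; right; apply/mapP; exists ([::], ch).
Qed.

Lemma mem_scuts_total s : (s, [::]) \in scuts s.
Proof.
elim: s => [|[d ch] s IHs]; first by rewrite mem_seq1.
rewrite -cat1s scuts_cat; apply/allpairsP; exists (([:: PNode d ch], [::]), (s, [::])).
by rewrite scuts_tree mem_head.
Qed.

Lemma scuts_fst_nil s c : c \in scuts s -> c.1 = [::] -> c.2 = s.
Proof.
elim/ptrees_ind: s c => [|d ch s IHch IHs] c; first by rewrite inE => /eqP ->.
rewrite -cat1s scuts_cat => /allpairsP [[[a1 a2] [b1 b2]] [/= + /IHs /= Hb ->]] /=.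
rewrite scuts_tree inE => /predU1P [[-> ->] //|/mapP [[x1 x2] /IHch /= Hx [-> ->]]].
by case: x1 Hx => // /(_ erefl) -> /Hb ->.
Qed.

Lemma scuts_snd_nil s c : c \in scuts s -> c.2 = [::] -> c.1 = s.
Proof.
elim: s c => [|[d ch] s IHs] c; first by rewrite inE => /eqP ->.
rewrite -cat1s scuts_cat => /allpairsP [[[a1 a2] [b1 b2]] [/= + /IHs /= Hb ->]] /=.
by rewrite scuts_tree inE => /predU1P [[-> ->] /= /Hb ->|/mapP [? _ [_ ->]]].
Qed.

End Cuts.

Section SumsOverCuts.
Variables (D : countType) (R : nmodType).
Local Notation tree := (ptree D).
Implicit Types (s : seq tree).

Lemma big_scuts_nil (f : seq tree * seq tree -> R) :
  \sum_(c <- scuts [::]) f c = f ([::], [::]).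
Proof. by rewrite scuts_nil big_seq1. Qed.

Lemma big_scuts_cat (f : seq tree * seq tree -> R) s1 s2 :
  \sum_(c <- scuts (s1 ++ s2)) f c =
  \sum_(a <- scuts s1) \sum_(b <- scuts s2) f (a.1 ++ b.1, a.2 ++ b.2).
Proof. by rewrite scuts_cat big_allpairs_dep. Qed.

Lemma big_scuts_tree (f : seq tree * seq tree -> R) d ch :
  \sum_(c <- scuts [:: PNode d ch]) f c =
  f ([:: PNode d ch], [::]) + \sum_(c <- scuts ch) f (c.1, [:: PNode d c.2]).
Proof. by rewrite scuts_tree big_cons big_map. Qed.

Definition coassociative_at s := forall f : seq tree -> seq tree -> seq tree -> R,
  \sum_(c <- scuts s) \sum_(c' <- scuts c.1) f c'.1 c'.2 c.2 =
  \sum_(c <- scuts s) \sum_(c' <- scuts c.2) f c.1 c'.1 c'.2.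

Lemma coassociative_at_tree d ch :
  coassociative_at ch -> coassociative_at [:: PNode d ch].
Proof.
move=> IH f; rewrite !big_scuts_tree /= big_scuts_nil -addrA; congr (_ + _).
under [RHS]eq_bigr do rewrite big_scuts_tree.
by rewrite big_split /= (IH (fun x y z => f x y [:: PNode d z])).
Qed.

Lemma coassociative_at_cat s1 s2 :
  coassociative_at s1 -> coassociative_at s2 -> coassociative_at (s1 ++ s2).
Proof.
move=> H1 H2 f; rewrite !big_scuts_cat.
transitivity (\sum_(a <- scuts s1) \sum_(x <- scuts a.1)
   \sum_(b <- scuts s2) \sum_(y <- scuts b.1)
     f (x.1 ++ y.1) (x.2 ++ y.2) (a.2 ++ b.2)).
  apply: eq_bigr => a _; rewrite [RHS]exchange_big /=; apply: eq_bigr => b _.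
  by rewrite big_scuts_cat.
transitivity (\sum_(a <- scuts s1) \sum_(x <- scuts a.1)
   \sum_(b <- scuts s2) \sum_(y <- scuts b.2)
     f (x.1 ++ b.1) (x.2 ++ y.1) (a.2 ++ y.2)).
  apply: eq_bigr => a _; apply: eq_bigr => x _.
  exact: (H2 (fun u v w => f (x.1 ++ u) (x.2 ++ v) (a.2 ++ w))).
transitivity (\sum_(b <- scuts s2) \sum_(a <- scuts s1) \sum_(x <- scuts a.1)
   \sum_(y <- scuts b.2) f (x.1 ++ b.1) (x.2 ++ y.1) (a.2 ++ y.2)).
  rewrite [RHS]exchange_big; apply: eq_bigr => a _.
  by rewrite [RHS]exchange_big.
transitivity (\sum_(b <- scuts s2) \sum_(a <- scuts s1) \sum_(x <- scuts a.2)
   \sum_(y <- scuts b.2) f (a.1 ++ b.1) (x.1 ++ y.1) (x.2 ++ y.2)).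
  apply: eq_bigr => b _.
  exact: (H1 (fun u v w => \sum_(y <- scuts b.2) f (u ++ b.1) (v ++ y.1) (w ++ y.2))).
rewrite exchange_big; apply: eq_bigr => a _; apply: eq_bigr => b _.
by rewrite big_scuts_cat.
Qed.

Lemma scuts_coassoc s : coassociative_at s.
Proof.
elim/ptrees_ind: s => [|d ch s IHch IHs].
  by move=> f; rewrite !big_scuts_nil /= ?big_scuts_nil.
by rewrite -cat1s; apply: coassociative_at_cat => //; apply: coassociative_at_tree.
Qed.

End SumsOverCuts.

Section Counit.
Variables (D : countType) (R : pzSemiRingType).
Local Notation tree := (ptree D).

Lemma scuts_counitl s (h : seq tree -> R) :
  \sum_(c <- scuts s) (c.1 == [::])%:R * h c.2 = h s.
Proof.
elim/ptrees_ind: s h => [|d ch s IHch IHs] h; first by rewrite big_scuts_nil mul1r.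
rewrite -cat1s big_scuts_cat.
transitivity (\sum_(a <- scuts [:: PNode d ch]) (a.1 == [::])%:R * h (a.2 ++ s)).
  apply: eq_bigr => -[a1 a2] _; rewrite -(IHs (fun x => h (a2 ++ x))) big_distrr /=.
  by apply: eq_bigr => -[[|? ?] b2] _; case: a1 => [|? ?]; rewrite /= ?mul1r ?mul0r.
by rewrite big_scuts_tree /= mul0r add0r (IHch (fun x => h (PNode d x :: s))).
Qed.

Lemma scuts_counitr s (h : seq tree -> R) :
  \sum_(c <- scuts s) h c.1 * (c.2 == [::])%:R = h s.
Proof.
elim: s h => [|[d ch] s IHs] h; first by rewrite big_scuts_nil mulr1.
rewrite -cat1s big_scuts_cat.
transitivity (\sum_(a <- scuts [:: PNode d ch]) h (a.1 ++ s) * (a.2 == [::])%:R).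
  apply: eq_bigr => -[a1 a2] _; rewrite -(IHs (fun x => h (a1 ++ x))) big_distrl /=.
  by apply: eq_bigr => -[b1 [|? ?]] _; case: a2 => [|? ?]; rewrite /= ?mulr1 ?mulr0.
by rewrite big_scuts_tree /= mulr1 big1 ?addr0 // => c _; rewrite mulr0.
Qed.

End Counit.

(** * The pairing *)

Section Pairing.
Variable D : countType.
Local Notation tree := (ptree D).
Implicit Types (t : tree) (F G : seq tree).

Definition sgamma (d : D) G : option (seq tree) :=
  match rev G with
  | t :: r => if t == PNode d [::] then Some (rev r) else None
  | [::] => None
  end.

Lemma sgamma_rcons d G t :
  sgamma d (rcons G t) = if t == PNode d [::] then Some G else None.
Proof. by rewrite /sgamma rev_rcons revK. Qed.

Lemma sgamma_Some d G G' : sgamma d G = Some G' -> G = rcons G' (PNode d [::]).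
Proof. by case/lastP: G => [|G t] //; rewrite sgamma_rcons; case: eqP => // -> [->]. Qed.

(* <F, G> := Psi(F)(G) for any Psi as in the theorem: multiplicativity forces
   <t F, G> = sum_c <t, P^c(G)> <F, R^c(G)>, and compatibility with B_d^+
   forces <B_d^+(F), G> = <F, G'> if G = G' bullet_d and 0 otherwise.  The
   inner fix is [pairing] on the children, inlined for structural recursion. *)
Fixpoint tpairing t G {struct t} : rat :=
  let: PNode d ch := t in
  if sgamma d G is Some G' then
    (fix pairing_ch F G {struct F} : rat :=
       if F is t' :: F' then \sum_(c <- scuts G) tpairing t' c.1 * pairing_ch F' c.2
       else (G == [::])%:R) ch G'
  else 0.

Fixpoint pairing F G {struct F} : rat :=
  if F is t :: F' then \sum_(c <- scuts G) tpairing t c.1 * pairing F' c.2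
  else (G == [::])%:R.

Lemma tpairingE d ch G :
  tpairing (PNode d ch) G = if sgamma d G is Some G' then pairing ch G' else 0.
Proof. by []. Qed.

Lemma pairing_nil G : pairing [::] G = (G == [::])%:R.
Proof. by []. Qed.

Lemma pairing_cons t F G :
  pairing (t :: F) G = \sum_(c <- scuts G) tpairing t c.1 * pairing F c.2.
Proof. by []. Qed.

Lemma pairing_seq1 t G : pairing [:: t] G = tpairing t G.
Proof. by rewrite pairing_cons (scuts_counitr G (tpairing t)). Qed.

Lemma tpairing_nilr t : tpairing t [::] = 0.
Proof. by case: t. Qed.

Lemma pairing_nilr F : pairing F [::] = (F == [::])%:R.
Proof.
by case: F => [|t F] //; rewrite pairing_cons big_scuts_nil tpairing_nilr mul0r.
Qed.

Arguments tpairing : simpl never.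
Arguments pairing : simpl never.

Lemma pairing_cat F1 F2 G :
  pairing (F1 ++ F2) G = \sum_(c <- scuts G) pairing F1 c.1 * pairing F2 c.2.
Proof.
elim: F1 G => [|t F1 IH] G /=; first by rewrite (scuts_counitl G (pairing F2)).
rewrite !pairing_cons.
transitivity (\sum_(c <- scuts G) \sum_(c' <- scuts c.2)
                 tpairing t c.1 * pairing F1 c'.1 * pairing F2 c'.2).
  by apply: eq_bigr => c _; rewrite IH mulr_sumr; apply: eq_bigr => c' _; rewrite mulrA.
rewrite -(scuts_coassoc G (fun x y z => tpairing t x * pairing F1 y * pairing F2 z)).
by apply: eq_bigr => c _; rewrite mulr_suml.
Qed.

Definition pairing_coproduct_at F := forall G1 G2,
  pairing F (G1 ++ G2) = \sum_(c <- scuts F) pairing c.1 G1 * pairing c.2 G2.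

Lemma pairing_coproduct_at_tree d ch :
  pairing_coproduct_at ch -> pairing_coproduct_at [:: PNode d ch].
Proof.
move=> IH G1 G2; rewrite big_scuts_tree /= !pairing_seq1 !pairing_nil.
under eq_bigr do rewrite pairing_seq1.
case/lastP: G2 => [|G2 u].
  by rewrite cats0 mulr1 big1 ?addr0 // => c _; rewrite tpairing_nilr mulr0.
have /negPf-> : rcons G2 u != [::] by case: G2.
rewrite mulr0 add0r -rcons_cat tpairingE sgamma_rcons.
under eq_bigr do rewrite tpairingE sgamma_rcons.
by case: eqP => _; [rewrite IH | rewrite big1 // => c _; rewrite mulr0].
Qed.

Lemma pairing_coproduct F : pairing_coproduct_at F.
Proof.
elim/ptrees_ind: F => [|d ch F IHch IHF] G1 G2.
  rewrite big_scuts_nil /= !pairing_nil.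
  by case: G1 => [|? ?]; case: G2 => [|? ?]; rewrite /= ?mulr1 ?mulr0.
rewrite -cat1s pairing_cat big_scuts_cat [RHS]big_scuts_cat.
under eq_bigr do under eq_bigr do rewrite pairing_coproduct_at_tree // IHF.
rewrite big_mul_exchange; apply: eq_bigr => x _; apply: eq_bigr => y _.
by rewrite !pairing_cat.
Qed.

Lemma pairing_weight F G : pairing F G != 0 -> sweight G = sweight F.
Proof.
elim/ptrees_ind: F G => [|d ch F IHch IHF] G; first by case: G.
rewrite pairing_cons; apply: contraNeq => neq_wt; rewrite big1_seq // => -[G1 G2].
move=> /andP[_ /scuts_weight /= wtG]; rewrite tpairingE.
case E: sgamma => [G1'|]; last by rewrite mul0r.
have [->|/IHch wt1] := eqVneq (pairing ch G1') 0; first by rewrite mul0r.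
have [->|/IHF wt2] := eqVneq (pairing F G2) 0; first by rewrite mulr0.
move: neq_wt; rewrite -wtG (sgamma_Some E) sweight_cons tweightE wt2.
by rewrite -cats1 sweight_cat -wt1 /sweight /= addn0 addn1 eqxx.
Qed.

End Pairing.

Section Enumeration.
Variable D : finType.
Local Notation tree := (ptree D).

(* Contains every sequence of trees of weight [n] once the fuel [k] is at least [n]. *)
Fixpoint weight_seqs (k n : nat) : seq (seq tree) :=
  if k is k'.+1 then
    if n is 0 then [:: [::]] else
    flatten [seq flatten [seq [seq PNode d F :: R | F <- weight_seqs k' m,
                                                    R <- weight_seqs k' (n - m.+1)]
                         | d <- enum D] | m <- iota 0 n]
  else if n is 0 then [:: [::]] else [::].

Lemma weight_seqs_complete k n s :
  sweight s = n -> (n <= k)%N -> s \in weight_seqs k n.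
Proof.
elim: k n s => [|k IH] [|n] [|[d F] R] //; try by rewrite /= mem_seq1.
rewrite sweight_cons tweightE => /eqP; rewrite addSn eqSS => /eqP wt_s le_nk.
have [inF inR] : F \in weight_seqs k (sweight F) /\
                 R \in weight_seqs k (n.+1 - (sweight F).+1) by split; apply: IH; lia.
apply/flattenP; eexists; first by apply/mapP; exists (sweight F) => //; rewrite mem_iota; lia.
apply/flattenP; eexists; first by apply/mapP; exists d; rewrite ?mem_enum.
by apply/allpairsP; exists (F, R).
Qed.

Definition forests_of_weight (n : nat) : seq (forest D) :=
  [seq F <- undup (map (@FMonom _) (weight_seqs n n)) | fweight F == n].

Lemma forests_of_weight_uniq n : uniq (forests_of_weight n).
Proof. by rewrite filter_uniq ?undup_uniq. Qed.

Lemma mem_forests_of_weight n (F : forest D) :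
  (F \in forests_of_weight n) = (fweight F == n).
Proof.
rewrite mem_filter andb_idr // => /eqP <-; rewrite mem_undup.
by apply/mapP; exists (fmonom_val F); [exact: weight_seqs_complete | case: F].
Qed.

End Enumeration.

(** * The morphism Psi *)

Section PsiDef.
Variable D : finType.
Implicit Types (F G : forest D) (x : HPR D).

Lemma fweightE F : fweight F = sweight F.
Proof. by []. Qed.

Lemma cutsE F : cuts F = [seq (FMonom c.1, FMonom c.2) | c <- scuts F].
Proof. by rewrite /cuts /scuts -map_comp. Qed.

Definition dual_pairing F : HPRgd D :=
  [malg G in [fset G | G in forests_of_weight D (fweight F)]%fset => pairing F G].

Lemma dual_pairingE F G : (dual_pairing F)@_G = pairing F G.
Proof.
rewrite mcoeffE inE mem_forests_of_weight; case: eqP => // neq_wt.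
by have [|/pairing_weight/neq_wt] := eqVneq (pairing F G) 0.
Qed.

Definition Psi x : HPRgd D := \sum_(F <- msupp x) x@_F *: dual_pairing F.

Lemma PsiEw (S : {fset forest D}) x G : (msupp x `<=` S)%fset ->
  (Psi x)@_G = \sum_(F <- S) x@_F * pairing F G.
Proof.
move=> le; rewrite /Psi raddf_sum /=.
under eq_bigr do rewrite mcoeffZ dual_pairingE.
by rewrite (big_fset_incl _ le) //= => F _ /mcoeff_outdom ->; rewrite mul0r.
Qed.

Lemma PsiE x G : (Psi x)@_G = \sum_(F <- msupp x) x@_F * pairing F G.
Proof. exact: PsiEw. Qed.

Lemma Psi_is_linear : linear Psi.
Proof.
move=> a x y; apply/malgP => G.
pose S := (msupp x `|` msupp y `|` msupp (a *: x + y))%fset.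
have [lex ley] : (msupp x `<=` S)%fset /\ (msupp y `<=` S)%fset.
  by split; apply/fsubsetP => F xF; rewrite !inE xF ?orbT.
rewrite (@PsiEw S) ?fsubsetUr // mcoeffD mcoeffZ (PsiEw _ lex) (PsiEw _ ley).
rewrite mulr_sumr -big_split /=; apply: eq_bigr => F _.
by rewrite mcoeffD mcoeffZ mulrDl mulrA.
Qed.

End PsiDef.

HB.instance Definition _ (D : finType) :=
  GRing.isLinear.Build rat (HPR D) (HPRgd D) *:%R (@Psi D) (@Psi_is_linear D).

Section PsiProperties.
Variable D : finType.
Implicit Types (F G : forest D) (x : HPR D).

Lemma Psi_monomial (a : rat) F G : (Psi << a *g F >>)@_G = a * pairing F G.
Proof. by rewrite (PsiEw _ msuppU_le) big_seq_fset1 mcoeffUU. Qed.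

Lemma Psi_basis F G : (Psi << F >>)@_G = pairing F G.
Proof. by rewrite Psi_monomial mul1r. Qed.

Lemma Psi_alg : is_alg_morph (@Psi D).
Proof.
split=> [F|x y G]; first by rewrite /dval Psi_basis fm1 pairing_nil fmP fm1.
rewrite /dval cutsE big_map malgME (raddf_sum (@Psi D)) raddf_sum /=.
transitivity (\sum_(F1 <- msupp x) \sum_(F2 <- msupp y) \sum_(c <- scuts G)
   (x@_F1 * pairing F1 c.1) * (y@_F2 * pairing F2 c.2)).
  apply: eq_bigr => F1 _; rewrite (raddf_sum (@Psi D)) raddf_sum /=; apply: eq_bigr => F2 _.
  rewrite Psi_monomial fmM pairing_cat mulr_sumr.
  by apply: eq_bigr => c _; rewrite mulrACA.
rewrite exchange_big; under eq_bigr do rewrite exchange_big.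
rewrite exchange_big; apply: eq_bigr => c _.
by rewrite !PsiE big_distrlr exchange_big.
Qed.

Lemma Psi_coalg : is_coalg_morph (@Psi D).
Proof.
split=> [x|K F G]; rewrite /dval.
  rewrite PsiE fm1; under eq_bigr do rewrite pairing_nilr -fm1 -fmP.
  rewrite [in RHS](monalgE x) raddf_sum /=; apply: eq_bigr => F _.
  by rewrite mcoeffU mulr_natr eq_sym.
rewrite Psi_basis fmM pairing_coproduct cutsE [in RHS]big_map.
by apply: eq_bigr => c _; rewrite !Psi_basis.
Qed.

Lemma gammaE d G : gamma d G = omap (@FMonom _) (sgamma d G).
Proof. by rewrite /gamma /sgamma; case: rev => //= t r; case: eqP. Qed.

Lemma Psi_Bplus : Bplus_compat (@Psi D).
Proof.
move=> d x G; rewrite /Bplus /gamma_gd /dval (raddf_sum (@Psi D)) raddf_sum gammaE /=.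
under eq_bigr do rewrite linearZ mcoeffZ Psi_basis pairing_seq1 tpairingE.
case: sgamma => [G'|] /=; last by rewrite big1 // => F _; rewrite mulr0.
by rewrite PsiE.
Qed.

Lemma Psi_graded : is_graded (@Psi D).
Proof. by move=> F G; rewrite /dval Psi_basis => /pairing_weight. Qed.

Lemma alg_Bplus_morph_pairing (Phi : {linear HPR D -> HPRgd D}) :
  is_alg_morph Phi -> Bplus_compat Phi ->
  forall s G, (Phi << FMonom s >>)@_G = pairing s G.
Proof.
move=> [Phi1 PhiM] PhiB; elim/ptrees_ind => [|d ch s IHch IHs] G.
  by move: (Phi1 G); rewrite /dval -fmoneE => ->; rewrite fmP fm1.
have -> : << FMonom (PNode d ch :: s) >> = Bplus d << FMonom ch >> * << FMonom s >>.
  rewrite /Bplus msuppU1 big_seq_fset1 mcoeffUU scale1r malgM_def fgmulUU mulr1.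
  by congr << _ >>; apply/eqP; rewrite fmP fmM.
rewrite [LHS]PhiM pairing_cons cutsE big_map; apply: eq_bigr => c _.
rewrite PhiB /dval IHs /gamma_gd gammaE tpairingE.
by case: sgamma => //= G'; rewrite /dval IHch.
Qed.

Lemma Psi_unique (Phi : {linear HPR D -> HPRgd D}) :
  is_alg_morph Phi -> Bplus_compat Phi -> Phi =1 @Psi D.
Proof.
move=> PhiM PhiB x; rewrite (monalgE x) !raddf_sum /=; apply: eq_bigr => F _.
apply/malgP => G; rewrite Psi_monomial malgZU linearZ mcoeffZ /=.
by rewrite -(alg_Bplus_morph_pairing PhiM PhiB) fmK.
Qed.

End PsiProperties.

(** * Surjectivity *)

Section Surjectivity.
Variable D : finType.
Local Notation tree := (ptree D).
Local Notation bullet d := (PNode d [::] : tree).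
Implicit Types (s G H : seq tree).

Definition last_weight s : nat := if rev s is t :: _ then tweight t else 0.

Lemma last_weight_rcons s t : last_weight (rcons s t) = tweight t.
Proof. by rewrite /last_weight rev_rcons. Qed.

Lemma mem_scuts_graft G d H : (H, rcons G (bullet d)) \in scuts (rcons G (PNode d H)).
Proof.
rewrite -!cats1 scuts_cat; apply/allpairsP; exists (([::], G), (H, [:: bullet d])).
rewrite mem_scuts_empty scuts_tree inE; split=> //; apply/orP; right.
by apply/mapP; exists (H, [::]); rewrite ?mem_scuts_total.
Qed.

Lemma scuts_graft_last_weight G d H F :
  (H, rcons G (bullet d)) \in scuts F ->
  F = rcons G (PNode d H) \/ (last_weight F <= sweight H)%N.
Proof.
case/lastP: F => [|F [e ch]]; first by rewrite mem_seq1 => /eqP [_]; case: G.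
rewrite -[rcons F _]cats1 scuts_cat => /allpairsP [[[a1 a2] [b1 b2]] [/= cutF + [-> +]]].
rewrite scuts_tree inE cats1 last_weight_rcons => /predU1P [[-> ->] _|].
  by right; rewrite sweight_cat sweight_cons /=; lia.
move=> /mapP [[x1 x2] cut_ch [-> ->]] /= /esym; rewrite cats1 => /eqP.
rewrite eqseq_rcons => /andP [/eqP <- /eqP [-> Ex2]].
move: (scuts_snd_nil cut_ch Ex2) => /= ->.
have [Ea1|Na1] := eqVneq a1 [::].
  by left; move: (scuts_fst_nil cutF Ea1) => /= ->; rewrite Ea1.
right; rewrite -/(sweight ch) sweight_cat; move: Na1; rewrite -sweight_gt0; lia.
Qed.

Lemma Psi_one : Psi (1 : HPR D) = << FMonom [::] >>.
Proof.
apply/malgP => G; have := (Psi_alg D).1 G; rewrite /dval => ->.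
by rewrite mcoeffU1 fmP fm1 eq_sym.
Qed.

Lemma Psi_Bplus_bullet (x : HPR D) d s :
  Psi x = << FMonom s >> -> Psi (Bplus d x) = << FMonom (rcons s (bullet d)) >>.
Proof.
move=> Px; apply/malgP => G; have := Psi_Bplus d x G; rewrite /dval => ->.
rewrite /gamma_gd gammaE /= Px mcoeffU1.
case E: sgamma => [G'|] /=.
  by rewrite /dval mcoeffU1 !fmP /= (sgamma_Some E) eqseq_rcons eqxx andbT.
by rewrite fmP /=; case: eqP => // EG; move: E; rewrite -EG sgamma_rcons eqxx.
Qed.

Lemma Psi_mul_basis (x y : HPR D) A B :
  Psi x = << FMonom A >> -> Psi y = << FMonom B >> ->
  forall G : forest D, (Psi (x * y))@_G = (count_mem (A, B) (scuts G))%:R.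
Proof.
move=> Px Py G; have := (Psi_alg D).2 x y G; rewrite /dval => ->.
rewrite Px Py cutsE big_map -sum1_count natr_sum [RHS]big_mkcond /=.
apply: eq_bigr => -[c1 c2] _; rewrite !mcoeffU1 /= !fmP /= xpair_eqE.
by rewrite (eq_sym A) (eq_sym B); case: (c1 == A); case: (c2 == B).
Qed.

Section Graft.
Variables (x y : HPR D) (G H : seq tree) (d : D).
Hypotheses (Px : Psi x = << FMonom H >>) (Py : Psi y = << FMonom (rcons G (bullet d)) >>).

Lemma Psi_mul_graft_neq0 : (Psi (x * y))@_(FMonom (rcons G (PNode d H))) != 0.
Proof.
rewrite (Psi_mul_basis Px Py) pnatr_eq0 -lt0n -has_count; apply/hasP.
by exists (H, rcons G (bullet d)); rewrite ?mem_scuts_graft /=.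
Qed.

Lemma Psi_mul_graft_supp (F : forest D) :
  (Psi (x * y))@_F != 0 -> F != FMonom (rcons G (PNode d H)) ->
  sweight F = sweight (rcons G (PNode d H)) /\ (last_weight F <= sweight H)%N.
Proof.
rewrite (Psi_mul_basis Px Py) pnatr_eq0 -lt0n -has_count => /hasP [c cutF /eqP Ec].
rewrite Ec {c Ec} in cutF => neqF; split.
  by have := scuts_weight cutF; rewrite /= !sweight_rcons !tweightE sweight_nil; lia.
case: (scuts_graft_last_weight cutF) => // EF.
by move: neqF; rewrite -(fmK F) EF eqxx.
Qed.

End Graft.

Lemma Psi_basis_in_image s : in_image (@Psi D) << FMonom s >>.
Proof.
have [n] := ubnP (sweight s); elim: n s => // n IHn s.
have [m] := ubnP (last_weight s); elim: m s => // m IHm s.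
case/lastP: s => [|G [d H]] lt_lw lt_wt; first by exists 1; exact: Psi_one.
have [-> | nzH] := eqVneq H [::].
  have [x Px] : in_image (@Psi D) << FMonom G >>.
    by apply: IHn; rewrite sweight_rcons /= in lt_wt; lia.
  by exists (Bplus d x); exact: Psi_Bplus_bullet.
rewrite -sweight_gt0 in nzH; rewrite sweight_rcons tweightE in lt_wt.
have [x Px] : in_image (@Psi D) << FMonom H >> by apply: IHn; lia.
have [y Py] : in_image (@Psi D) << FMonom (rcons G (bullet d)) >>.
  by apply: IHn; rewrite sweight_rcons /=; lia.
apply: (in_image_malgU (f := Psi (x * y))) => [||F suppF neqF].
- by exists (x * y).
- exact: Psi_mul_graft_neq0.
have /(Psi_mul_graft_supp Px Py) [] // : (Psi (x * y))@_F != 0 by rewrite mcoeff_neq0.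
rewrite sweight_rcons tweightE last_weight_rcons tweightE in lt_lw * => wtF lwF.
by rewrite -(fmK F); apply: IHm; lia.
Qed.

End Surjectivity.

(** * Injectivity *)

Section Injectivity.
Variable D : finType.
Implicit Types (x : HPR D) (F G : forest D).

Lemma Psi_homogeneous x G :
  (Psi x)@_G = \sum_(F <- forests_of_weight D (fweight G)) x@_F * pairing F G.
Proof.
rewrite PsiE; apply/perm_big_supp/uniq_perm => [||F].
- exact/filter_uniq/fset_uniq.
- exact/filter_uniq/forests_of_weight_uniq.
rewrite 2!mem_filter; apply: andb_id2l.
rewrite mulf_eq0 negb_or -mcoeff_neq0 => /andP [-> /pairing_weight wtG].
by rewrite mem_forests_of_weight !fweightE wtG eqxx.
Qed.

Lemma Psi_surjective (f : HPRgd D) : exists x, Psi x == f.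
Proof.
have [x <-] : in_image (@Psi D) f.
  rewrite (monalgE f); apply: in_image_sum => F _ _; rewrite malgZU.
  by apply/in_imageZ; rewrite -(fmK F); apply: Psi_basis_in_image.
by exists x.
Qed.

Definition Psi_inv (f : HPRgd D) : HPR D := xchoose (Psi_surjective f).

Lemma Psi_invK : cancel Psi_inv (@Psi D).
Proof. by move=> f; apply/eqP/(xchooseP (Psi_surjective f)). Qed.

Section Degree.
Variable n : nat.
Local Notation e := (forests_of_weight D n).
Local Notation N := (size e).
Local Notation e_ i := (nth (mone : forest D) e i).

Definition pairing_mx : 'M[rat]_N := \matrix_(i, j) pairing (e_ i) (e_ j).

Lemma Psi_coord x (k : 'I_N) :
  \sum_(j < N) x@_(e_ j) * pairing_mx j k = (Psi x)@_(e_ k).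
Proof.
have /eqP wt_k : fweight (e_ k) == n by rewrite -mem_forests_of_weight mem_nth.
rewrite Psi_homogeneous wt_k (big_nth mone) big_mkord.
by apply: eq_bigr => j _; rewrite mxE.
Qed.

Lemma pairing_mx_unit : pairing_mx \in unitmx.
Proof.
pose Y : 'M[rat]_N := \matrix_(i, j) (Psi_inv << e_ i >>)@_(e_ j).
suff /mulmx1_unit [] : Y *m pairing_mx = 1%:M by [].
apply/matrixP => i k; rewrite !mxE; under eq_bigr do rewrite mxE.
by rewrite Psi_coord Psi_invK mcoeffU1 nth_uniq ?forests_of_weight_uniq.
Qed.

Lemma Psi_kernel_coef x F : Psi x = 0 -> fweight F = n -> x@_F = 0.
Proof.
move=> Px0 wtF; pose v : 'rV[rat]_N := \row_j x@_(e_ j).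
have : v *m pairing_mx == 0.
  apply/eqP/rowP => k; rewrite !mxE; under eq_bigr do rewrite mxE.
  by rewrite Psi_coord Px0 mcoeff0.
rewrite mulmx_free_eq0 ?row_free_unit ?pairing_mx_unit // => /eqP/rowP.
have Fe : F \in e by rewrite mem_forests_of_weight wtF.
by move=> /(_ (Ordinal (etrans (index_mem F e) Fe))); rewrite !mxE nth_index.
Qed.

End Degree.

Lemma Psi_injective : injective (@Psi D).
Proof.
move=> x y Pxy; apply/eqP; rewrite -subr_eq0; apply/eqP/malgP => F.
by rewrite mcoeff0 (@Psi_kernel_coef (fweight F)) // linearB /= Pxy subrr.
Qed.

Lemma Psi_bijective : bijective (@Psi D).
Proof.
by exists Psi_inv => [x|]; [apply: Psi_injective; rewrite Psi_invK | exact: Psi_invK].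
Qed.

End Injectivity.

Theorem mainTheorem3 (D : finType) (hD : (0 < #|D|)%N) :
  exists Psi : {linear HPR D -> HPRgd D},
    [/\ is_hopf_morph Psi, Bplus_compat Psi,
        (forall Psi' : {linear HPR D -> HPRgd D},
            is_hopf_morph Psi' -> Bplus_compat Psi' -> Psi' =1 Psi),
        bijective Psi & is_graded Psi].
Proof.
exists (@Psi D); split.
- by split; [exact: Psi_alg | exact: Psi_coalg].
- exact: Psi_Bplus.
- by move=> Phi [PhiM _] PhiB; exact: Psi_unique.
- exact: Psi_bijective.
- exact: Psi_graded.
Qed.
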